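(* Let $A(z)=\sum_{k=0}^{\infty}a_kz^k$ with $a_0\neq 0$ and $H(z)=\sum_{k=1}^{\infty}h_kz^k$ with $h_1\neq 0$ be analytic in a disk $|z|<R$ with $R>1$, with real coefficients. Let the Sheffer polynomials $p_k$ be defined by $A(t)e^{xH(t)}=\sum_{k=0}^{\infty}p_k(x)t^k$ for $|t|<R$, and assume $p_k(x)\ge 0$ for all $x\ge 0$ and all $k$, $A(1)\neq 0$ and $H'(1)=1$. Let $(b_n)$ be a positive increasing sequence with $b_n\to\infty$ and $b_n/n\to 0$, and define $$T_n^*(f;x)=\frac{e^{-\frac{n}{b_n}xH(1)}}{A(1)}\sum_{k=0}^{\infty}p_k\Big(\frac{n}{b_n}x\Big)f\Big(\frac{k}{n}b_n\Big).$$ Let $a>0$. If $f\in C_E[0,\infty)$, then for every $x\in[0,a]$, $$|T_n^*(f;x)-f(x)|\le\Bigg\{1+\sqrt{\big(1+H''(1)\big)a+\frac{b_n}{n}\frac{A'(1)+A''(1)}{A(1)}}\Bigg\}\,\omega\Big(f,\sqrt{\tfrac{b_n}{n}}\Big).$$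
   Context: $C_E[0,\infty)$ denotes the set of continuous functions $f$ on $[0,\infty)$ such that $|f(x)|\le \beta e^{\alpha x}$ for all $x\ge 0$, for some finite positive constants $\alpha,\beta$. For $\delta>0$, $\omega(f,\delta)=\sup\{|f(x)-f(y)|: x,y\in[0,\infty),\ |x-y|\le\delta\}$ is the modulus of continuity of $f$. *)

From HB Require Import structures.
From mathcomp Require Import all_boot all_order all_algebra.
From mathcomp Require Import all_classical all_reals all_analysis.
Set Implicit Arguments. Unset Strict Implicit. Unset Printing Implicit Defensive.
Import Order.TTheory GRing.Theory Num.Theory.
Import numFieldNormedType.Exports.
Local Open Scope classical_set_scope.
Local Open Scope ring_scope.

Definition psval {R : realType} (c : nat -> R) (z : R) : R :=
  limn (series (fun k => c k * z ^+ k)).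

Definition C_E {R : realType} (f : R -> R) : Prop :=
  {within `[0, +oo[, continuous f} /\
  exists alpha beta : R, 0 < alpha /\ 0 < beta /\
    forall x : R, 0 <= x -> `|f x| <= beta * expR (alpha * x).

(* modulus of continuity on [0,oo), valued in the extended reals
   (it may be +oo for f in C_E[0,oo)) *)
Definition modcont {R : realType} (f : R -> R) (d : R) : \bar R :=
  ereal_sup [set e : \bar R | exists x y : R,
     [/\ 0 <= x, 0 <= y, `|x - y| <= d & e = (`|f x - f y|)%:E]].

Definition Tstar {R : realType} (a h : nat -> R) (p : nat -> {poly R})
  (b : nat -> R) (n : nat) (f : R -> R) (x : R) : R :=
  expR (- (n%:R / b n * x * psval h 1)) / psval a 1 *
  limn (series (fun k => (p k).[n%:R / b n * x] * f (k%:R / n%:R * b n))).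

From HB Require Import structures.
From mathcomp Require Import all_boot all_order all_algebra.
From mathcomp Require Import all_classical all_reals all_analysis.
From mathcomp Require Import ring lra.
Set Implicit Arguments. Unset Strict Implicit. Unset Printing Implicit Defensive.
Import Order.TTheory GRing.Theory Num.Theory.
Import numFieldNormedType.Exports.
Local Open Scope classical_set_scope.
Local Open Scope ring_scope.

(* Put y = n x / b_n, q = b_n / n and c_k = p_k(y) >= 0, so that
   T_n^*(f; x) = (sum_k c_k f(k q)) / (sum_k c_k).  The sums of c_k, k c_k and
   k (k - 1) c_k are G(1), G'(1) and G''(1) for the generating function
   G(t) = A(t) exp(y H(t)); with H'(1) = 1 they give
     sum_k c_k (k q - x)^2 / sum_k c_k = q K,
     K = (1 + H''(1)) x + q (A'(1) + A''(1)) / A(1).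
   Splitting [0, oo) into steps of length d = sqrt q gives
   |f(s) - f(x)| <= (1 + |s - x| / d) w with w = omega(f, d), and
   |s - x| / d <= e/2 + (s - x)^2 / (2 e d^2) for every e > 0, hence
   |T_n^* f(x) - f(x)| <= w (1 + e/2 + K/(2 e)); optimizing in e yields
   w (1 + sqrt K).  This AM-GM step replaces the usual Cauchy-Schwarz
   inequality.  Positivity of the p_k forces A(1) > 0 and 1 + H''(1) >= 0, so
   K increases with x. *)

Section PowerSeries.
Variable R : realType.
Implicit Types (c u : R ^nat) (Rad t x : R).

Lemma ler_first_binomial_term (t e : R) k : 0 <= t -> 0 <= e ->
  k.+1%:R * t ^+ k * e <= (t + e) ^+ k.+1.
Proof.
move=> t0 e0; elim: k => [|k IH]; first by rewrite expr0 expr1 !mul1r lerDr.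
have tk : t ^+ k.+1 <= (t + e) ^+ k.+1 by rewrite lerXn2r ?nnegrE ?addr_ge0 ?lerDl.
have -> : k.+2%:R * t ^+ k.+1 * e = t * (k.+1%:R * t ^+ k * e) + e * t ^+ k.+1.
  by rewrite -(natr1 k.+1) exprS; ring.
by rewrite [leRHS]exprS mulrDl; apply: lerD; apply: ler_wpM2l.
Qed.

Lemma is_cvg_series_shiftS u : cvgn (series u) -> cvgn (series (fun k => u k.+1)).
Proof.
move=> /cvg_ex[l ul].
have -> : series (fun k => u k.+1) = fun n => series u n.+1 - u 0%N.
  by apply/funext => n; rewrite /series /= big_nat_recl //= addrC addKr.
by apply: is_cvgB; [apply/cvg_ex; exists l; rewrite cvg_shiftS | exact: is_cvg_cst].
Qed.

Lemma near_norm_lt Rad t : `|t| < Rad -> \forall s \near t, `|s| < Rad.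
Proof.
move=> tR; have : open_nbhs t (ball (0 : R) Rad).
  by split; [exact: ball_open | rewrite /ball /= sub0r normrN].
by move=> /open_nbhs_nbhs; apply: filterS => s; rewrite /ball /= sub0r normrN.
Qed.

Lemma is_cvg_pseries_diffs c Rad :
  (forall z, `|z| < Rad -> cvgn (pseries c z)) ->
  forall z, `|z| < Rad -> cvgn (pseries (pseries_diffs c) z).
Proof.
move=> c_cvg z zR; pose t := `|z|; pose e := (Rad - t) / 3.
have t0 : 0 <= t := normr_ge0 z.
have e0 : 0 < e by rewrite divr_gt0 // subr_gt0.
have abs_cvg : cvgn (pseries (fun i => `|c i|) (t + e)).
  apply: (@is_cvg_pseries_inside_norm _ _ (t + e + e)).
    by apply: c_cvg; rewrite ger0_norm ?addr_ge0 ?(ltW e0) // /e /t; lra.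
  by rewrite !ger0_norm ?addr_ge0 ?(ltW e0) // ltrDl.
apply: normed_cvg.
apply: (@series_le_cvg _ _ (fun k => e^-1 * (`|c k.+1| * (t + e) ^+ k.+1))).
- by move=> n; apply: normr_ge0.
- move=> n /=; rewrite mulr_ge0 ?invr_ge0 ?(ltW e0) // mulr_ge0 // exprn_ge0 //.
  by rewrite addr_ge0 // ltW.
- move=> n /=; rewrite /pseries_diffs !normrM normrX -/t normr_nat.
  have -> : n.+1%:R * `|c n.+1| * t ^+ n = e^-1 * (`|c n.+1| * (n.+1%:R * t ^+ n * e)).
    by field; rewrite gt_eqF.
  rewrite ler_wpM2l ?invr_ge0 ?(ltW e0) // ler_wpM2l //.
  exact: ler_first_binomial_term (ltW e0).
- exact/is_cvg_seriesZ/(is_cvg_series_shiftS abs_cvg).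
Qed.

Lemma is_derive_psval c Rad x : (forall z, `|z| < Rad -> cvgn (pseries c z)) -> `|x| < Rad ->
  is_derive x 1 (psval c) (psval (pseries_diffs c) x).
Proof.
move=> c_cvg xR; have dc := is_cvg_pseries_diffs c_cvg.
have ddc := is_cvg_pseries_diffs dc.
pose K := (`|x| + Rad) / 2.
have [xK KR] : `|x| < `|K| /\ `|K| < Rad.
  rewrite [`|K|]ger0_norm /K; first by split; lra.
  by rewrite divr_ge0 // addr_ge0 // (le_trans _ (ltW xR)).
exact: pseries_snd_diffs (c_cvg _ KR) (dc _ KR) (ddc _ KR) xK.
Qed.

Lemma derive1_psval c Rad x : (forall z, `|z| < Rad -> cvgn (pseries c z)) ->
  `|x| < Rad -> derive1 (psval c) x = psval (pseries_diffs c) x.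
Proof. by move=> c_cvg xR; rewrite derive1E; have [_ ->] := is_derive_psval c_cvg xR. Qed.

Lemma derive1n2_psval c Rad x : (forall z, `|z| < Rad -> cvgn (pseries c z)) ->
  `|x| < Rad ->
  derive1n 2 (psval c) x = psval (pseries_diffs (pseries_diffs c)) x.
Proof.
move=> c_cvg xR; rewrite /derive1n /= derive1E.
have -> : 'D_1 (derive1 (psval c)) x = 'D_1 (psval (pseries_diffs c)) x.
  apply: near_eq_derive; near=> s; apply: (derive1_psval c_cvg).
  by near: s; exact: near_norm_lt.
by have [_ ->] := is_derive_psval (is_cvg_pseries_diffs c_cvg) xR.
Unshelve. all: by end_near.
Qed.

Lemma psval_diffs_near_eq c Rad (f : R -> R) t df :
  (forall z, `|z| < Rad -> cvgn (pseries c z)) -> `|t| < Rad ->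
  (\forall s \near t, f s = psval c s) -> is_derive t 1 f df ->
  psval (pseries_diffs c) t = df.
Proof.
move=> c_cvg tR fc /(near_eq_is_derive fc) [_ <-].
by have [_ <-] := is_derive_psval c_cvg tR.
Qed.

End PowerSeries.

Section FactorialMoments.
Variables (R : realType) (c : R ^nat) (Rad : R).
Hypothesis Rad_gt1 : 1 < Rad.
Hypothesis c_cvg : forall z, `|z| < Rad -> cvgn (pseries c z).

Let norm1_lt : `|1 : R| < Rad. Proof. by rewrite normr1. Qed.

Lemma cvg_series_psval1 : series c @ \oo --> psval c 1.
Proof.
have c1 : (fun k => c k * 1 ^+ k) = c by apply/funext => k; rewrite expr1n mulr1.
by have := c_cvg norm1_lt; rewrite /pseries /psval /= c1 => /cvg_ex[l cl]; rewrite (cvg_lim _ cl).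
Qed.

Lemma cvg_series_natM_psval1 : series (fun k => k%:R * c k) @ \oo --> psval (pseries_diffs c) 1.
Proof.
have := pseries_diffs_equiv (is_cvg_pseries_diffs c_cvg norm1_lt).
by under eq_fun do rewrite expr1n mulr1.
Qed.

Lemma cvg_series_falling2_psval1 :
  series (fun k => k%:R * (k%:R - 1) * c k) @ \oo -->
    psval (pseries_diffs (pseries_diffs c)) 1.
Proof.
rewrite -cvg_shiftS; apply: cvg_trans (pseries_diffs_equiv
  (is_cvg_pseries_diffs (is_cvg_pseries_diffs c_cvg) norm1_lt)).
apply: near_eq_cvg; apply: nearW => n /=.
rewrite /series /= big_nat_recl //= !mul0r add0r; apply: eq_bigr => k _.
by rewrite expr1n mulr1 /pseries_diffs -natr1 addrK; ring.
Qed.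

Lemma cvg_series_central_moment2 (y : R) :
  series (fun k => c k * (k%:R - y) ^+ 2) @ \oo -->
    y ^+ 2 * psval c 1 + (1 - 2 * y) * psval (pseries_diffs c) 1
    + psval (pseries_diffs (pseries_diffs c)) 1.
Proof.
have -> : series (fun k => c k * (k%:R - y) ^+ 2) =
    y ^+ 2 *: series c + (1 - 2 * y) *: series (fun k => k%:R * c k)
    + series (fun k => k%:R * (k%:R - 1) * c k).
  apply/funext => n; rewrite !fctE /series /= !scaler_sumr -!big_split /=.
  by apply: eq_bigr => k _; rewrite /GRing.scale /=; ring.
apply: cvgD; first apply: cvgD; try apply: cvgZl_tmp.
- exact: cvg_series_psval1.
- exact: cvg_series_natM_psval1.
- exact: cvg_series_falling2_psval1.
Qed.

End FactorialMoments.

Section ModulusOfContinuity.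
Variables (R : realType) (g : R -> R) (d r : R).
Hypothesis d_gt0 : 0 < d.
Hypothesis g_mod : forall s t, 0 <= s -> 0 <= t -> `|s - t| <= d -> `|g s - g t| <= r.

Let r_ge0 : 0 <= r.
Proof. by apply: le_trans (g_mod (lexx 0) (lexx 0) _); rewrite subrr normr0 // ltW. Qed.

Lemma modulus_le_natM N s t : 0 <= t -> t <= s -> s - t <= N.+1%:R * d ->
  `|g s - g t| <= N.+1%:R * r.
Proof.
elim: N s t => [|N IH] s t t0 ts std.
  by rewrite mul1r g_mod ?(le_trans t0 ts) // ger0_norm ?subr_ge0 // -(mul1r d).
have [sd|ds] := leP (s - t) d.
  rewrite (le_trans (g_mod _ _ _)) ?(le_trans t0 ts) ?ger0_norm ?subr_ge0 //.
  by rewrite ler_peMl // ler1n.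
have td0 : 0 <= t + d by rewrite addr_ge0 // ltW.
have gs : `|g s - g (t + d)| <= N.+1%:R * r.
  by apply: IH => //; [lra | move: std; rewrite -(@natr1 R N.+1) mulrDl mul1r; lra].
have gt : `|g (t + d) - g t| <= r.
  by apply: g_mod => //; rewrite addrAC subrr add0r ger0_norm // ltW.
have -> : g s - g t = (g s - g (t + d)) + (g (t + d) - g t) by rewrite addrA subrK.
rewrite -(@natr1 R N.+1) mulrDl mul1r.
exact: le_trans (ler_normD _ _) (lerD gs gt).
Qed.

Lemma modulus_le_dist s t : 0 <= s -> 0 <= t -> `|g s - g t| <= (1 + `|s - t| / d) * r.
Proof.
wlog ts : s t / t <= s.
  move=> le_gst s0 t0; have [/le_gst|/ltW st] := leP t s; first exact.
  by rewrite distrC [`|s - t|]distrC le_gst.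
move=> _ t0; have q0 : 0 <= (s - t) / d by rewrite divr_ge0 ?subr_ge0 // ltW.
have /andP[lo hi] := truncn_itv q0.
apply: le_trans (modulus_le_natM (N := Num.truncn ((s - t) / d)) t0 ts _) _.
  by rewrite -ler_pdivrMr // ltW.
by rewrite ler_wpM2r // ger0_norm ?subr_ge0 // -natr1 addrC lerD2l.
Qed.

End ModulusOfContinuity.

Section PositiveSeriesApproximation.
Variable R : realType.

Lemma lim_series_ge0 (c : R ^nat) (M : R) :
  (forall k, 0 <= c k) -> series c @ \oo --> M -> 0 <= M.
Proof.
move=> c0 cM; rewrite -(cvg_lim _ cM) //; apply: limr_ge; first exact: cvgP cM.
by apply: nearW => n; apply: sumr_ge0 => k _.
Qed.

Lemma affine_ge0_slope_ge0 (C D : R) :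
  (forall y, 0 <= y -> 0 <= C + y * D) -> 0 <= D.
Proof.
move=> CD; rewrite leNgt; apply/negP => D0.
have y0 : 0 <= (`|C| + 1) / - D by rewrite divr_ge0 ?addr_ge0 // oppr_ge0 ltW.
have yD : (`|C| + 1) / - D * D = - (`|C| + 1) by field; rewrite lt_eqF.
by have := CD _ y0; rewrite yD; have := ler_norm C; lra.
Qed.

Lemma ler_amgm (e l : R) : 0 < e -> l <= e / 2 + l ^+ 2 / (2 * e).
Proof.
move=> e0; rewrite -subr_ge0.
have -> : e / 2 + l ^+ 2 / (2 * e) - l = (e - l) ^+ 2 / (2 * e) by field; rewrite gt_eqF.
by rewrite divr_ge0 ?sqr_ge0 // mulr_ge0 // ltW.
Qed.

Lemma ler_mul_sqrt_amgm (z r K : R) : 0 <= r -> 0 <= K ->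
  (forall e, 0 < e -> z <= r * (e / 2 + K / (2 * e))) -> z <= r * Num.sqrt K.
Proof.
move=> r0 K0 zle; apply/ler_addgt0Pr => u u0.
set s := Num.sqrt K; have s0 : 0 <= s := sqrtr_ge0 K.
have sK : s ^+ 2 = K by rewrite sqr_sqrtr.
pose v := 2 * u / (r + 1).
have v0 : 0 < v by rewrite divr_gt0 ?mulr_gt0 // ltr_pwDr.
(* with [e := s + v], the AM-GM bound is at most [r * s + r * v / 2] *)
have e0 : 0 < s + v by rewrite ltr_pwDr.
apply: le_trans (zle _ e0) _.
have Ke : K / (2 * (s + v)) <= s / 2.
  by rewrite ler_pdivrMr ?mulr_gt0 // -sK; nra.
have rv : r * v / 2 <= u.
  have -> : r * v / 2 = u * r / (r + 1) by rewrite /v; field; rewrite gt_eqF // ltr_pwDr.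
  by rewrite ler_pdivrMr ?ltr_pwDr // mulrDr mulr1 lerDl ltW.
apply: le_trans (ler_wpM2l r0 (lerD (lexx _) Ke)) _; lra.
Qed.

Lemma lim_series_approx (c t : R ^nat) (g : R -> R) (x d r M0 S e : R) :
  (forall k, 0 <= c k) -> (forall k, 0 <= t k) -> 0 <= x -> 0 < d -> 0 < e ->
  (forall s u, 0 <= s -> 0 <= u -> `|s - u| <= d -> `|g s - g u| <= r) ->
  series c @ \oo --> M0 -> series (fun k => c k * (t k - x) ^+ 2) @ \oo --> S ->
  `|limn (series (fun k => c k * g (t k))) - M0 * g x| <=
    r * ((1 + e / 2) * M0 + S / (2 * e * d ^+ 2)).
Proof.
move=> c0 t0 x0 d0 e0 g_mod cM0 cS.
have r0 : 0 <= r by apply: le_trans (g_mod 0 0 _ _ _) => //; rewrite subrr normr0 ltW.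
pose u k := c k * (g (t k) - g x).
pose w k := r * ((1 + e / 2) * c k + c k * (t k - x) ^+ 2 / (2 * e * d ^+ 2)).
have w_cvg : series w @ \oo --> r * ((1 + e / 2) * M0 + S / (2 * e * d ^+ 2)).
  have -> : series w = r *: ((1 + e / 2) *: series c
      + (2 * e * d ^+ 2)^-1 *: series (fun k => c k * (t k - x) ^+ 2)).
    apply/funext => n; rewrite !fctE /series /= !scaler_sumr -big_split /=.
    by rewrite scaler_sumr; apply: eq_bigr => k _; rewrite /w /GRing.scale /=; ring.
  by rewrite [S / _]mulrC; apply: cvgZl_tmp; apply: cvgD; apply: cvgZl_tmp.
have uw k : `|u k| <= w k.
  have -> : w k = c k * (r * (1 + (e / 2 + (`|t k - x| / d) ^+ 2 / (2 * e)))).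
    by rewrite expr_div_n real_normK ?num_real // /w; field; rewrite !gt_eqF.
  rewrite /u normrM ger0_norm // ler_wpM2l //.
  rewrite (le_trans (modulus_le_dist d0 g_mod (t0 k) x0)) // mulrC ler_wpM2l //.
  by rewrite lerD2l ler_amgm.
have abs_u_cvg : cvgn (series (fun k => `|u k|)).
  apply: (series_le_cvg (fun k => normr_ge0 _) (fun k => le_trans (normr_ge0 _) (uw k)) uw).
  exact: cvgP w_cvg.
have u_cvg : cvgn (series u) := normed_cvg abs_u_cvg.
have cg : series (fun k => c k * g (t k)) = series u + g x *: series c.
  by apply/funext => n; rewrite !fctE /series /= scaler_sumr -big_split; apply: eq_bigr => k _;
    rewrite /u /GRing.scale /=; ring.
have cg_cvg : series (fun k => c k * g (t k)) @ \oo --> limn (series u) + g x * M0.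
  by rewrite cg; apply: cvgD; [exact: u_cvg | exact: cvgZl_tmp].
rewrite (cvg_lim _ cg_cvg) // -(cvg_lim _ w_cvg) // [M0 * _]mulrC addrK.
apply: le_trans (lim_series_norm abs_u_cvg) _.
by apply: lim_series_le => //; exact: cvgP w_cvg.
Qed.

End PositiveSeriesApproximation.

Section Sheffer.
Variables (R : realType) (Rad : R) (a h : nat -> R) (p : nat -> {poly R}).
Hypothesis Rad_gt1 : 1 < Rad.
Hypothesis a_cvg : forall z : R, `|z| < Rad -> cvgn (pseries a z).
Hypothesis h_cvg : forall z : R, `|z| < Rad -> cvgn (pseries h z).
Hypothesis p_gen : forall x t : R, `|t| < Rad ->
  series (fun k => (p k).[x] * t ^+ k) @ \oo --> psval a t * expR (x * psval h t).
Hypothesis p_ge0 : forall k (x : R), 0 <= x -> 0 <= (p k).[x].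
Hypothesis dh1 : psval (pseries_diffs h) 1 = 1.
Hypothesis a1_neq0 : psval a 1 != 0.

Section GeneratingFunction.
Variable y : R.
Implicit Types t z : R.

Let c k := (p k).[y].
Let A := psval a.
Let A' := psval (pseries_diffs a).
Let A'' := psval (pseries_diffs (pseries_diffs a)).
Let H' := psval (pseries_diffs h).
Let H'' := psval (pseries_diffs (pseries_diffs h)).
Let E t := expR (y * psval h t).

Lemma is_cvg_sheffer z : `|z| < Rad -> cvgn (pseries c z).
Proof. by move=> zR; apply/cvg_ex; eexists; exact: p_gen. Qed.

Lemma psval_sheffer t : `|t| < Rad -> psval c t = A t * E t.
Proof. by move=> tR; apply: cvg_lim => //; exact: p_gen. Qed.

Let is_derive_E t : `|t| < Rad -> is_derive t 1 E (E t * (y * H' t)).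
Proof.
move=> tR; have dyH := is_deriveZ y (is_derive_psval h_cvg tR).
by have := is_derive1_comp (is_derive_expR _) dyH.
Qed.

Lemma psval_diffs_sheffer t : `|t| < Rad ->
  psval (pseries_diffs c) t = E t * (A' t + y * A t * H' t).
Proof.
move=> tR; apply: (psval_diffs_near_eq is_cvg_sheffer tR (f := A * E)).
  by near=> s; rewrite psval_sheffer //; near: s; exact: near_norm_lt.
apply: is_derive_eq; first exact: is_deriveM (is_derive_psval a_cvg tR) (is_derive_E tR).
by rewrite /A /A' /H' /GRing.scale /=; ring.
Unshelve. all: by end_near.
Qed.

Lemma psval_diffs2_sheffer t : `|t| < Rad ->
  psval (pseries_diffs (pseries_diffs c)) t =
    E t * (A'' t + 2 * y * A' t * H' t + y * A t * H'' t + (y * H' t) ^+ 2 * A t).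
Proof.
move=> tR; have dc := is_cvg_pseries_diffs is_cvg_sheffer.
have dA := is_derive_psval a_cvg tR.
have dA' := is_derive_psval (is_cvg_pseries_diffs a_cvg) tR.
have dH' := is_derive_psval (is_cvg_pseries_diffs h_cvg) tR.
apply: (psval_diffs_near_eq dc tR (f := E * (A' + y \*: (A * H')))).
  near=> s; rewrite psval_diffs_sheffer; last by near: s; exact: near_norm_lt.
  by rewrite !fctE /= -[_ *: _]/(_ * _) mulrA.
apply: (is_derive_eq
  (is_deriveM (is_derive_E tR) (is_deriveD dA' (is_deriveZ y (is_deriveM dA dH'))))).
by rewrite /A /A' /A'' /H' /H'' !fctE /GRing.scale /= -[y *: _]/(y * _); ring.
Unshelve. all: by end_near.
Qed.

End GeneratingFunction.

Let norm1_lt : `|1 : R| < Rad. Proof. by rewrite normr1. Qed.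
Let A := psval a 1.
Let A' := psval (pseries_diffs a) 1.
Let A'' := psval (pseries_diffs (pseries_diffs a)) 1.
Let H'' := psval (pseries_diffs (pseries_diffs h)) 1.

Lemma cvg_series_sheffer (y : R) :
  series (fun k => (p k).[y]) @ \oo --> A * expR (y * psval h 1).
Proof.
rewrite -(psval_sheffer y norm1_lt).
exact: cvg_series_psval1 Rad_gt1 (is_cvg_sheffer (y := y)).
Qed.

Lemma cvg_series_sheffer_central_moment2 (y : R) :
  series (fun k => (p k).[y] * (k%:R - y) ^+ 2) @ \oo -->
    expR (y * psval h 1) * (A' + A'' + y * A * (1 + H'')).
Proof.
have := cvg_series_central_moment2 Rad_gt1 (is_cvg_sheffer (y := y)) (y := y).
rewrite (psval_sheffer y norm1_lt) (psval_diffs_sheffer y norm1_lt).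
rewrite (psval_diffs2_sheffer y norm1_lt) dh1.
by congr (_ @ _ --> _); rewrite /A /A' /A'' /H''; ring.
Qed.

Let A_gt0 : 0 < A.
Proof.
rewrite lt_def a1_neq0 /=; have := cvg_series_sheffer (y := 0).
rewrite mul0r expR0 mulr1; exact: lim_series_ge0 (fun k => p_ge0 k (lexx 0)).
Qed.

Lemma H''_ge_m1 : 0 <= 1 + H''.
Proof.
rewrite -(pmulr_rge0 _ A_gt0).
apply: (@affine_ge0_slope_ge0 _ (A' + A'')) => y y0.
have := lim_series_ge0 (fun k => mulr_ge0 (p_ge0 k y0) (sqr_ge0 _))
  (cvg_series_sheffer_central_moment2 (y := y)).
by rewrite pmulr_rge0 ?expR_gt0 // mulrA.
Qed.

Section Operator.
Variables (b : nat -> R) (n : nat) (f : R -> R) (x r : R).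
Hypothesis bn_gt0 : 0 < b n.
Hypothesis n_gt0 : (0 < n)%N.
Hypothesis x_ge0 : 0 <= x.
Hypothesis f_mod : forall s t, 0 <= s -> 0 <= t ->
  `|s - t| <= Num.sqrt (b n / n%:R) -> `|f s - f t| <= r.

Let q := b n / n%:R.
Let y := n%:R / b n * x.
Let E := expR (y * psval h 1).
Let K := (1 + H'') * x + q * ((A' + A'') / A).

Let q_gt0 : 0 < q. Proof. by rewrite divr_gt0 // ltr0n. Qed.
Let x_qy : x = q * y. Proof. by rewrite /q /y; field; rewrite !gt_eqF ?ltr0n. Qed.
Let y_ge0 : 0 <= y. Proof. by rewrite mulr_ge0 // divr_ge0 // ltW. Qed.

Let K_ge0 : 0 <= K.
Proof.
have := lim_series_ge0 (fun k => mulr_ge0 (p_ge0 k y_ge0) (sqr_ge0 _))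
  (cvg_series_sheffer_central_moment2 (y := y)).
rewrite pmulr_rge0 ?expR_gt0 // => V0.
have -> : K = q / A * (A' + A'' + y * A * (1 + H'')).
  by rewrite /K x_qy; field; rewrite gt_eqF.
by rewrite mulr_ge0 // divr_ge0 // ltW.
Qed.

Lemma Tstar_sub_le_amgm e : 0 < e ->
  `|Tstar a h p b n f x - f x| <= r * (1 + (e / 2 + K / (2 * e))).
Proof.
move=> e0.
have d0 : 0 < Num.sqrt q by rewrite sqrtr_gt0.
have t0 k : 0 <= k%:R / n%:R * b n by rewrite mulr_ge0 // ltW.
have E0 : 0 < E by rewrite expR_gt0.
have nodes_cvg : series (fun k => (p k).[y] * (k%:R / n%:R * b n - x) ^+ 2) @ \oo -->
    q ^+ 2 * (E * (A' + A'' + y * A * (1 + H''))).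
  have -> : (fun k => (p k).[y] * (k%:R / n%:R * b n - x) ^+ 2) =
      q ^+ 2 *: (fun k => (p k).[y] * (k%:R - y) ^+ 2).
    apply/funext => k; rewrite !fctE x_qy /q /GRing.scale /=.
    by field; rewrite gt_eqF ?ltr0n.
  by rewrite seriesZ; apply: cvgZl_tmp; exact: cvg_series_sheffer_central_moment2.
have bound := lim_series_approx (fun k => p_ge0 k y_ge0) t0 x_ge0 d0 e0 f_mod
  (cvg_series_sheffer (y := y)) nodes_cvg.
have -> : Tstar a h p b n f x - f x =
    (limn (series (fun k => (p k).[y] * f (k%:R / n%:R * b n))) - A * E * f x) / (A * E).
  by rewrite /Tstar -/y expRN -/E -/A; field; rewrite !gt_eqF.
rewrite normrM [`|_^-1|]gtr0_norm ?invr_gt0 ?mulr_gt0 // ler_pdivrMr ?mulr_gt0 //.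
apply: le_trans bound _; rewrite le_eqVlt; apply/orP; left; apply/eqP.
by rewrite sqr_sqrtr ?ltW // -/A -/E /K x_qy; field; rewrite !gt_eqF.
Qed.

Lemma Tstar_sub_le : `|Tstar a h p b n f x - f x| <= (1 + Num.sqrt K) * r.
Proof.
have r0 : 0 <= r by apply: le_trans (f_mod (lexx 0) (lexx 0) _); rewrite subrr normr0 // sqrtr_ge0.
rewrite mulrDl mul1r mulrC -lerBlDl; apply: ler_mul_sqrt_amgm r0 K_ge0 _.
by move=> e /Tstar_sub_le_amgm; rewrite mulrDr mulr1 lerBlDl.
Qed.

End Operator.

End Sheffer.

Lemma modcont_ge0 (R : realType) (f : R -> R) (d : R) : 0 <= d -> (0 <= modcont f d)%E.
Proof.
by move=> d0; apply: ereal_sup_ubound; exists 0, 0; rewrite !subrr normr0.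
Qed.

Lemma modcont_le (R : realType) (f : R -> R) (d r : R) : modcont f d = r%:E ->
  forall s t, 0 <= s -> 0 <= t -> `|s - t| <= d -> `|f s - f t| <= r.
Proof.
move=> fd s t s0 t0 std; rewrite -lee_fin -fd.
by apply: ereal_sup_ubound; exists s, t.
Qed.

Unset Implicit Arguments.
Theorem theorem2p6 (R : realType) (Rad : R) (a h : nat -> R)
  (p : nat -> {poly R}) (b : nat -> R) (f : R -> R) (aa : R) :
  1 < Rad ->
  (forall z : R, `|z| < Rad -> cvgn (series (fun k => a k * z ^+ k))) ->
  (forall z : R, `|z| < Rad -> cvgn (series (fun k => h k * z ^+ k))) ->
  a 0%N != 0 -> h 0%N = 0 -> h 1%N != 0 ->
  (forall x t : R, `|t| < Rad ->
     series (fun k => (p k).[x] * t ^+ k) @ \oo -->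
       psval a t * expR (x * psval h t)) ->
  (forall (k : nat) (x : R), 0 <= x -> 0 <= (p k).[x]) ->
  psval a 1 != 0 ->
  derive1 (psval h) 1 = 1 ->
  (forall n, 0 < b n) ->
  {homo b : m n / (m <= n)%N >-> m <= n} ->
  b @ \oo --> +oo ->
  (fun n => b n / n%:R) @ \oo --> 0 ->
  0 < aa ->
  C_E f ->
  forall (n : nat) (x : R), (0 < n)%N -> 0 <= x <= aa ->
  ((`|Tstar a h p b n f x - f x|)%:E <=
    (1 + Num.sqrt ((1 + derive1n 2 (psval h) 1) * aa
         + b n / n%:R * ((derive1 (psval a) 1 + derive1n 2 (psval a) 1) / psval a 1)))%:E
    * modcont f (Num.sqrt (b n / n%:R)))%E.
Proof.
move=> Rad_gt1 a_cvg h_cvg _ _ _ p_gen p_ge0 a1_neq0 dh1 b_gt0 _ _ _ _ _ n x n_gt0.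
move=> /andP[x0 xaa]; have norm1 : `|1 : R| < Rad by rewrite normr1.
rewrite (derive1_psval a_cvg norm1) (derive1n2_psval a_cvg norm1).
rewrite (derive1n2_psval h_cvg norm1).
rewrite (derive1_psval h_cvg norm1) in dh1.
have mod_ge0 := modcont_ge0 f (sqrtr_ge0 (b n / n%:R)).
case mod_fin: (modcont f _) mod_ge0 => [r | | //] r_ge0; last first.
  by rewrite gt0_muley ?leey // lte_fin ltr_pwDl ?sqrtr_ge0.
rewrite -EFinM lee_fin; apply: le_trans (Tstar_sub_le Rad_gt1 a_cvg h_cvg p_gen p_ge0
  dh1 a1_neq0 (b_gt0 n) n_gt0 x0 (modcont_le mod_fin)) _.
rewrite ler_wpM2r // lerD2l ler_wsqrtr // lerD2r ler_wpM2l //.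
exact: H''_ge_m1 Rad_gt1 a_cvg h_cvg p_gen p_ge0 dh1 a1_neq0.
Qed.
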